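(* Let $t$ and $s$ be terms in the language of strong quasi-MV* algebras. Then $\mathbf{S^*}\models t\approx s$ if and only if $\mathbf{D^*}\models t\approx s$.
   Context: Terms in the language of strong quasi-MV* algebras are built from variables and constants $0,1$ using a binary operation $\oplus$ and unary operations $-,{}^+,{}^-$; $\mathbf{A}\models t\approx s$ means $t$ and $s$ take equal values under every assignment of variables in $\mathbf{A}$. $\mathbf{S^*}$ is the algebra with universe $S^*=[-1,1]\times[-1,1]\subseteq\mathbb{R}^2$ and operations $\langle a,b\rangle\oplus\langle c,d\rangle=\langle\max\{-1,\min\{1,a+c\}\},0\rangle$, $-\langle a,b\rangle=\langle -a,-b\rangle$, $\langle a,b\rangle^+=\langle\max\{0,a\},0\rangle$, $\langle a,b\rangle^-=\langle\min\{0,a\},0\rangle$, $0=\langle 0,0\rangle$, $1=\langle 1,0\rangle$. $\mathbf{D^*}$ is the subalgebra of $\mathbf{S^*}$ with universe $D^*=\{\langle a,b\rangle\in\mathbb{R}^2:a^2+b^2\le 1\}$. *)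

From Stdlib Require Import Reals.
Open Scope R_scope.

Inductive term : Type :=
| Var : nat -> term
| Zero : term
| One : term
| Oplus : term -> term -> term
| Neg : term -> term
| Pos : term -> term
| NegPart : term -> term.

(* Operations of S* on pairs of reals (D* is a subalgebra, same operations). *)
Definition clamp (x : R) : R := Rmax (-1) (Rmin 1 x).

Definition s_oplus (p q : R * R) : R * R := (clamp (fst p + fst q), 0).
Definition s_neg (p : R * R) : R * R := (- fst p, - snd p).
Definition s_pos (p : R * R) : R * R := (Rmax 0 (fst p), 0).
Definition s_negpart (p : R * R) : R * R := (Rmin 0 (fst p), 0).
Definition s_zero : R * R := (0, 0).
Definition s_one : R * R := (1, 0).

Fixpoint eval (v : nat -> R * R) (t : term) : R * R :=
  match t with
  | Var n => v n
  | Zero => s_zero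
  | One => s_one
  | Oplus a b => s_oplus (eval v a) (eval v b)
  | Neg a => s_neg (eval v a)
  | Pos a => s_pos (eval v a)
  | NegPart a => s_negpart (eval v a)
  end.

Definition in_S (p : R * R) : Prop :=
  -1 <= fst p <= 1 /\ -1 <= snd p <= 1.
Definition in_D (p : R * R) : Prop :=
  fst p ^ 2 + snd p ^ 2 <= 1.

Definition models_S (t s : term) : Prop :=
  forall v : nat -> R * R, (forall n, in_S (v n)) -> eval v t = eval v s.
Definition models_D (t s : term) : Prop :=
  forall v : nat -> R * R, (forall n, in_D (v n)) -> eval v t = eval v s.

(* The two coordinates of a term's value are computed independently: the
   first depends only on the first coordinates of the variables, the second
   only on the second ones.  An assignment into the square S* can therefore
   be replaced, coordinate by coordinate, by its projections onto the two
   axes, and these lie in the disc D*.  The converse direction is immediate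
   since D* is a subset of S*. *)

From Stdlib Require Import Reals Lra.
Open Scope R_scope.

Lemma in_D_in_S (p : R * R) : in_D p -> in_S p.
Proof.
  destruct p as [a b]; unfold in_D, in_S; simpl; intro Hab.
  assert (a * a <= 1) by nra.
  assert (b * b <= 1) by nra.
  split; split; nra.
Qed.

Lemma in_S_fst_in_D (p : R * R) : in_S p -> in_D (fst p, 0).
Proof. unfold in_S, in_D; simpl; intros [[? ?] _]; nra. Qed.

Lemma in_S_snd_in_D (p : R * R) : in_S p -> in_D (0, snd p).
Proof. unfold in_S, in_D; simpl; intros [_ [? ?]]; nra. Qed.

Lemma fst_eval_ext (v w : nat -> R * R) (t : term) :
  (forall n, fst (v n) = fst (w n)) -> fst (eval v t) = fst (eval w t).
Proof.
  intro Hvw; induction t; simpl; auto;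
  unfold s_oplus, s_neg, s_pos, s_negpart; simpl; congruence.
Qed.

Lemma snd_eval_ext (v w : nat -> R * R) (t : term) :
  (forall n, snd (v n) = snd (w n)) -> snd (eval v t) = snd (eval w t).
Proof.
  intro Hvw; induction t; simpl; auto;
  unfold s_oplus, s_neg, s_pos, s_negpart; simpl; congruence.
Qed.

Theorem proposition3p3 (t s : term) : models_S t s <-> models_D t s.
Proof.
  split.
  - intros HS v Hv; apply HS; intro n; apply in_D_in_S, Hv.
  - intros HD v Hv; apply injective_projections.
    + set (v1 := fun n => (fst (v n), 0)).
      rewrite !(fst_eval_ext v v1) by reflexivity.
      rewrite (HD v1); [reflexivity |].
      intro n; apply in_S_fst_in_D, Hv.
    + set (v2 := fun n => (0, snd (v n))).
      rewrite !(snd_eval_ext v v2) by reflexivity.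
      rewrite (HD v2); [reflexivity |].
      intro n; apply in_S_snd_in_D, Hv.
Qed.
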